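(* For every $g\ge 1$, $\det(K_{g+1})=[\det(K_g)]^3\det(A_g)$.
   Context: The graphs $\mathcal{H}_g$ with hubs $v_1,v_2,v_3,v_4$ and orientations $\mathcal{H}_g^e$ are defined recursively. $\mathcal{H}_1$ is the 4-cycle with edges $\{v_1,v_2\},\{v_1,v_3\},\{v_2,v_4\},\{v_3,v_4\}$, oriented $v_1\to v_2$, $v_1\to v_3$, $v_4\to v_2$, $v_3\to v_4$. For $g>1$, take four disjoint copies $\mathcal{H}_{g-1}^{(i)}$, $i=1,\dots,4$, of $\mathcal{H}_{g-1}$, each oriented as a copy of $\mathcal{H}_{g-1}^e$, with hubs $v_k^{(i)}$; identify $v_1^{(1)},v_1^{(4)}$ as $v_1$, $v_2^{(2)},v_1^{(3)}$ as $v_4$, $v_2^{(1)},v_1^{(2)}$ as $v_3$, and $v_2^{(3)},v_2^{(4)}$ as $v_2$; $\mathcal{H}_g^e$ is the union of the copies' orientations. $A_g$ is the skew adjacency matrix of $\mathcal{H}_g^e$: its $(u,v)$ entry is $1$ if $u\to v$ is an arc, $-1$ if $v\to u$ is an arc, and $0$ otherwise. $K_g$ is the submatrix of $A_g$ obtained by deleting the rows and columns corresponding to $v_1$ and $v_2$. *)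

From mathcomp Require Import all_boot all_order all_algebra.
Set Implicit Arguments. Unset Strict Implicit. Unset Printing Implicit Defensive.
Import GRing.Theory.
Local Open Scope ring_scope.

(* Vertices of H_g are numbered 0 .. nv g - 1, with hubs
   v1 = 0, v2 = 1, v3 = 2, v4 = 3.  (g = 0 is junk: same as g = 1.) *)
Fixpoint nv (g : nat) : nat :=
  match g with
  | 0 => 4
  | 1 => 4
  | g'.+1 => (4 * nv g' - 4)%N
  end.

(* Embedding of vertex k of the copy H_g^{(c+1)} (c = 0..3) into H_{g+1}:
   hub v1^{(c+1)} and v2^{(c+1)} are identified with global hubs
   (copy1: v1,v3; copy2: v3,v4; copy3: v4,v2; copy4: v1,v2);
   every other vertex of the copy becomes a fresh vertex. *)
Definition emb (g c k : nat) : nat :=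
  if k == 0%N then nth 0%N [:: 0; 2; 3; 0]%N c
  else if k == 1%N then nth 0%N [:: 2; 3; 1; 1]%N c
  else (4 + c * (nv g - 2) + (k - 2))%N.

Fixpoint harc (g : nat) (u v : nat) : bool :=
  match g with
  | 0 | 1 =>
      ((u == 0) && (v == 1)) || ((u == 0) && (v == 2)) ||
      ((u == 3) && (v == 1)) || ((u == 2) && (v == 3))
  | g'.+1 =>
      [exists c : 'I_4, exists a : 'I_(nv g'), exists b : 'I_(nv g'),
         [&& harc g' a b, emb g' c a == u & emb g' c b == v]]
  end%N.

Definition skew (g u v : nat) : int :=
  if harc g u v then 1 else if harc g v u then -1 else 0.

Definition A (g : nat) : 'M[int]_(nv g) := \matrix_(i, j) skew g i j.

Definition K (g : nat) : 'M[int]_(nv g - 2) :=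
  \matrix_(i, j) skew g (i + 2)%N (j + 2)%N.

(* Deleting v1 and v2 from H_(g+1) isolates the interior of the fourth copy, so K_(g+1)
   is block diagonal with blocks K_g and the matrix M on v3, v4 and the interiors of
   the first three copies.  The interiors contribute the block diag(K_g, K_g, K_g) to M,
   and the Schur complement of that block is the Schur complement of K_g in A_g plus
   contributions of the first and third copies, which are diagonal entries of a skew
   matrix and hence vanish.  Thus det M = det(K_g)^2 det(A_g) when K_g is invertible;
   the general case follows by perturbing K_g to K_g + X J with J skew and invertible,
   and setting X = 0. *)

From mathcomp Require Import all_boot all_order all_algebra.
From mathcomp Require Import ring zify.
(* Imported last, so that [skew] is the skew adjacency matrix of Defs rather than the
   MathComp notation for skew-symmetric forms. *)
From Pilot Require Import Defs.
Set Implicit Arguments. Unset Strict Implicit. Unset Printing Implicit Defensive.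
Import GRing.Theory.
Local Open Scope ring_scope.

Section DeltaMx.
Variable R : pzSemiRingType.

Lemma delta_mulmxE m n p (i0 : 'I_m) (j0 : 'I_n) (X : 'M[R]_(n, p)) i j :
  (delta_mx i0 j0 *m X) i j = (i == i0)%:R * X j0 j.
Proof.
rewrite !mxE (bigD1 j0) //= big1 ?addr0 => [|k /negbTE nkj]; rewrite mxE.
  by rewrite eqxx andbT.
by rewrite nkj andbF mul0r.
Qed.

Lemma delta_mulmx_delta m n p q (i : 'I_m) (j : 'I_n) (k : 'I_p) (l : 'I_q)
    (X : 'M[R]_(n, p)) :
  delta_mx i j *m X *m delta_mx k l = X j k *: delta_mx i l.
Proof.
apply/matrixP => a b; rewrite !mxE (bigD1 k) //= big1 ?addr0 => [|c /negbTE nck].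
  rewrite delta_mulmxE !mxE eqxx /=.
  by case: (a == i); case: (b == l); rewrite ?mulr1 ?mulr0 ?mul1r ?mul0r.
by rewrite [delta_mx k l c b]mxE nck mulr0.
Qed.
End DeltaMx.

Lemma det_block_mx_adj (R : comPzRingType) p k (P : 'M[R]_p) (U : 'M_(p, k))
    (V : 'M_(k, p)) (D Dadj : 'M_k) (e : R) :
  D *m Dadj = e%:M ->
  \det (block_mx P U V D) * e ^+ p = \det (e *: P - U *m Dadj *m V) * \det D.
Proof.
move=> DDadj.
have := det_mulmx (block_mx P U V D) (block_mx e%:M 0 (- (Dadj *m V)) 1%:M).
rewrite det_lblock det_scalar det1 mulr1 mulmx_block => <-.
rewrite !mulmx0 !mulmx1 ?addr0 ?add0r !mulmxN !mulmxA DDadj mul_scalar_mx.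
by rewrite !mul_mx_scalar subrr det_ublock.
Qed.

Lemma skew_mx_diag (R : idomainType) n (Z : 'M[R]_n) i :
  Z^T = - Z -> 2%:R != 0 :> R -> Z i i = 0.
Proof.
move=> ZT n2; have /eqP : Z i i = - Z i i by rewrite -{1}[Z]trmxK ZT !mxE.
rewrite -subr_eq0 opprK -mulr2n -mulr_natr mulf_eq0 (negbTE n2) orbF.
by move/eqP.
Qed.

Lemma trmx_adj_skew (R : comPzRingType) m (K : 'M[R]_m) :
  K^T = - K -> ~~ odd m -> (\adj K)^T = - \adj K.
Proof.
case: m K => [|m] K KT m_even; first by apply/matrixP => -[].
rewrite trmx_adj KT -scaleN1r adjZ /= -signr_odd.
by move: m_even => /= /negbNE ->; rewrite scaleN1r.
Qed.

Lemma det_mx_fun_cast (R : comPzRingType) (F : nat -> nat -> R) N N' : N = N' ->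
  \det (\matrix_(i < N, j < N) F i j) = \det (\matrix_(i < N', j < N') F i j).
Proof. by move->. Qed.

Definition skew_block_mx (R : zmodType) p q (B : 'M[R]_p) (U : 'M[R]_(p, q))
    (D : 'M[R]_q) :=
  block_mx B U (- U^T) D.

Lemma skew_submxK (R : zmodType) p q (M : 'M[R]_(p + q)) :
  M^T = - M -> skew_block_mx (ulsubmx M) (ursubmx M) (drsubmx M) = M.
Proof.
move=> MT; rewrite /skew_block_mx trmx_ursub MT.
rewrite (_ : dlsubmx (- M) = - dlsubmx M) ?opprK ?submxK //.
by apply/matrixP => i j; rewrite !mxE.
Qed.

Lemma trmx_ulsub_skew (R : zmodType) p q (M : 'M[R]_(p + q)) :
  M^T = - M -> (ulsubmx M)^T = - ulsubmx M.
Proof. by move=> MT; apply/matrixP => i j; rewrite trmx_ulsub MT !mxE. Qed.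

(* Two hubs w1, w2 and three copies of a skew matrix with hub rows U and interior K:
   the first copy meets only w1 (through its second hub), the second meets w1 and w2,
   the third meets only w2 (through its first hub). *)
Definition chain3_mx (R : pzRingType) m (B : 'M[R]_2) (U : 'M[R]_(2, m))
    (K : 'M[R]_m) :=
  skew_block_mx B (row_mx (delta_mx 0 1 *m U) (row_mx U (delta_mx 1 0 *m U)))
    (block_mx K 0 0 (block_mx K 0 0 K)).

Lemma det_chain3_mx_unit (R : idomainType) m (B : 'M[R]_2) (U : 'M_(2, m))
    (K : 'M_m) :
  K^T = - K -> ~~ odd m -> 2%:R != 0 :> R -> \det K != 0 ->
  \det (chain3_mx B U K) = \det K ^+ 2 * \det (skew_block_mx B U K).
Proof.
move=> KT m_even n2 dK_neq0.
set d := \det K; set Q := \adj K.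
have KQ : K *m Q = d%:M by rewrite mul_mx_adj.
set Z := U *m Q *m U^T.
have Zdiag i : Z i i = 0.
  apply: skew_mx_diag n2.
  by rewrite /Z !trmx_mul trmx_adj_skew // trmxK mulNmx mulmxN mulmxA.
have KQ3 : block_mx K 0 0 (block_mx K 0 0 K) *m block_mx Q 0 0 (block_mx Q 0 0 Q) = d%:M.
  by rewrite !mulmx_block !mulmx0 !mul0mx !addr0 !add0r KQ -!scalar_mx_block.
set U3 := row_mx (delta_mx 0 1 *m U) (row_mx U (delta_mx 1 0 *m U)).
have U3Z : U3 *m block_mx Q 0 0 (block_mx Q 0 0 Q) *m (- U3^T) = U *m Q *m (- U^T).
  rewrite !mulmxN; congr (- _).
  rewrite !tr_row_mx !trmx_mul !trmx_delta !mul_row_block !mulmx0 !addr0 !add0r.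
  rewrite !mul_row_col !mulmxA -!(mulmxA (delta_mx _ _) U) -!(mulmxA _ (U *m Q)) -/Z.
  by rewrite !delta_mulmx_delta !Zdiag !scale0r add0r addr0.
have := det_block_mx_adj B U3 (- U3^T) KQ3.
have := det_block_mx_adj B U (- U^T) KQ.
rewrite !det_ublock -/d U3Z => dA dM.
apply: (mulIf (_ : d ^+ 2 != 0)); first by rewrite expf_neq0.
rewrite /chain3_mx /skew_block_mx dM -mulrA dA; ring.
Qed.

Definition symplectic_mx (R : pzRingType) k : 'M[R]_(k + k) :=
  block_mx 0 1%:M (- 1%:M) 0.

Lemma trmx_symplectic (R : pzRingType) k : (symplectic_mx R k)^T = - symplectic_mx R k.
Proof.
by rewrite /symplectic_mx tr_block_mx !trmx0 raddfN /= trmx1 opp_block_mx !oppr0 opprK.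
Qed.

Lemma mulmx_symplectic (R : pzRingType) k :
  symplectic_mx R k *m symplectic_mx R k = - 1%:M.
Proof.
rewrite /symplectic_mx mulmx_block !mulmx0 !mul0mx !mulmx1 !addr0 !add0r.
by rewrite mul1mx -!(raddfN (@scalar_mx _ _)) -scalar_mx_block.
Qed.

Lemma det_symplectic_neq0 (R : idomainType) k : \det (symplectic_mx R k) != 0.
Proof.
apply/negP => /eqP dJ0.
have := det_mulmx (symplectic_mx R k) (symplectic_mx R k).
by rewrite mulmx_symplectic dJ0 mul0r -scaleN1r scalemx1 det_scalar => /eqP; rewrite signr_eq0.
Qed.

Lemma map_skew_block_mx (R S : pzRingType) (f : {rmorphism R -> S}) p q
    (B : 'M[R]_p) (U : 'M_(p, q)) (D : 'M_q) :
  map_mx f (skew_block_mx B U D) = skew_block_mx (map_mx f B) (map_mx f U) (map_mx f D).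
Proof. by rewrite /skew_block_mx map_block_mx map_mxN map_trmx. Qed.

Lemma map_chain3_mx (R S : pzRingType) (f : {rmorphism R -> S}) m
    (B : 'M[R]_2) (U : 'M_(2, m)) (K : 'M_m) :
  map_mx f (chain3_mx B U K) = chain3_mx (map_mx f B) (map_mx f U) (map_mx f K).
Proof.
rewrite /chain3_mx map_skew_block_mx !(map_row_mx, map_block_mx, map_mxM, map_mx0).
by rewrite !map_delta_mx.
Qed.

Lemma det_chain3_mx (R : idomainType) m (B : 'M[R]_2) (U : 'M_(2, m)) (K : 'M_m) :
  K^T = - K -> ~~ odd m -> 2%:R != 0 :> R ->
  \det (chain3_mx B U K) = \det K ^+ 2 * \det (skew_block_mx B U K).
Proof.
move=> KT m_even n2.
have [k mkk] : exists k, m = (k + k)%N by exists m./2; rewrite addnn even_halfK.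
subst m; set J := symplectic_mx R k.
pose KX : 'M[{poly R}]_(k + k) := map_mx polyC K + 'X *: map_mx polyC J.
have KXT : KX^T = - KX.
  by rewrite raddfD /= linearZ /= !map_trmx KT trmx_symplectic !map_mxN opprD scalerN.
have dKX : \det KX != 0.
  have -> : KX = map_mx polyC J *m char_poly_mx (J *m K).
    rewrite /char_poly_mx mulmxBr map_mxM mulmxA -map_mxM mulmx_symplectic.
    by rewrite mul_mx_scalar map_mxN map_mx1 mulNmx mul1mx opprK addrC.
  rewrite det_mulmx det_map_mx mulf_eq0 negb_or polyC_eq0 det_symplectic_neq0.
  exact: monic_neq0 (char_poly_monic _).
have n2X : 2%:R != 0 :> {poly R} by rewrite -(rmorph_nat (@polyC R)) polyC_eq0.
have := det_chain3_mx_unit (map_mx polyC B) (map_mx polyC U) KXT m_even n2X dKX.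
move=> /(congr1 (horner_eval 0)).
rewrite rmorphM rmorphXn -!det_map_mx map_chain3_mx map_skew_block_mx.
have evalC p q (X : 'M[R]_(p, q)) : map_mx (horner_eval 0) (map_mx polyC X) = X.
  by apply/matrixP => i j; rewrite !mxE horner_evalE hornerC.
have evalKX : map_mx (horner_eval 0) KX = K.
  by apply/matrixP => i j; rewrite !mxE horner_evalE !hornerE.
by rewrite !evalC evalKX.
Qed.

Lemma nv_succ g : (1 <= g)%N -> nv g.+1 = (4 * nv g - 4)%N.
Proof. by case: g. Qed.

Lemma nv_ge4 g : (4 <= nv g)%N.
Proof. by elim: g => [|[|g] IH] //; rewrite nv_succ //; lia. Qed.

Lemma even_nv_sub2 g : ~~ odd (nv g - 2).
Proof. by case: g => [|[|g]] //; rewrite nv_succ //; have := nv_ge4 g.+1; lia. Qed.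

Lemma harc_succ g u v : (1 <= g)%N -> harc g.+1 u v =
  [exists c : 'I_4, exists a : 'I_(nv g), exists b : 'I_(nv g),
     [&& harc g a b, emb g c a == u & emb g c b == v]].
Proof. by case: g. Qed.

Section Embedding.
Variables (g c c' : nat).
Hypotheses (c_lt4 : (c < 4)%N) (c'_lt4 : (c' < 4)%N).

Lemma emb_eq_cases x x' : (x < nv g)%N -> (x' < nv g)%N ->
  emb g c x = emb g c' x' -> (c = c' /\ x = x') \/ (x < 2 /\ x' < 2)%N.
Proof.
have := nv_ge4 g; rewrite /emb; move: (nv g) c_lt4 c'_lt4 => n.
by case: c => [|[|[|[|?]]]] // _; case: c' => [|[|[|[|?]]]] // _ /=;
  repeat case: ifP => /eqP ?; lia.
Qed.

Lemma emb_hub_inj x x' : (x < 2)%N -> (x' < 2)%N -> emb g c x = emb g c x' -> x = x'.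
Proof.
by rewrite /emb; move: c_lt4; case: c => [|[|[|[|?]]]] // _;
  case: x => [|[|?]] // _; case: x' => [|[|?]].
Qed.

Lemma emb_hub_pair_inj a b a' b' : (a < 2)%N -> (b < 2)%N -> (a' < 2)%N -> (b' < 2)%N ->
  a != b -> emb g c a = emb g c' a' -> emb g c b = emb g c' b' ->
  [/\ c = c', a = a' & b = b'].
Proof.
rewrite /emb; move: c_lt4 c'_lt4.
by case: c => [|[|[|[|?]]]] // _; case: c' => [|[|[|[|?]]]] // _;
  case: a => [|[|?]] // _; case: b => [|[|?]] // _;
  case: a' => [|[|?]] // _; case: b' => [|[|?]].
Qed.

Lemma emb_pair_inj a b a' b' : (a < nv g)%N -> (b < nv g)%N ->
  (a' < nv g)%N -> (b' < nv g)%N ->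
  a != b -> emb g c a = emb g c' a' -> emb g c b = emb g c' b' ->
  [/\ c = c', a = a' & b = b'].
Proof.
move=> a_lt b_lt a'_lt b'_lt ab ea eb.
case: (emb_eq_cases a_lt a'_lt ea) => [[cc' aa']|[a2 a'2]];
case: (emb_eq_cases b_lt b'_lt eb) => [[cc'' bb']|[b2 b'2]].
- by [].
- by split => //; apply: (emb_hub_inj b2 b'2); rewrite eb cc'.
- by split => //; apply: (emb_hub_inj a2 a'2); rewrite ea cc''.
- exact: emb_hub_pair_inj.
Qed.
End Embedding.

Lemma harc_asym g u v : ~~ (harc g u v && harc g v u).
Proof.
elim: g u v => [|g IH] u v.
  by case: u => [|[|[|[|u]]]]; case: v => [|[|[|[|v]]]].
case: g IH => [|g] IH.
  by case: u => [|[|[|[|u]]]]; case: v => [|[|[|[|v]]]].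
rewrite !harc_succ //; apply/negP.
move=> /andP [/existsP [c /existsP [a /existsP [b /and3P [h /eqP ea /eqP eb]]]]].
move=> /existsP [c' /existsP [a' /existsP [b' /and3P [h' /eqP ea' /eqP eb']]]].
have ab : (a : nat) != b by apply: contraTneq h => ->; have := IH b b; case: harc.
have [_ ab' ba'] := emb_pair_inj (ltn_ord c) (ltn_ord c') (ltn_ord a) (ltn_ord b)
  (ltn_ord b') (ltn_ord a') ab (etrans ea (esym eb')) (etrans eb (esym ea')).
by move: (IH a b); rewrite h ab' ba' h'.
Qed.

Lemma skew_antisym g u v : skew g v u = - skew g u v.
Proof.
rewrite /skew; have := harc_asym g u v.
by case: (harc g u v); case: (harc g v u); rewrite ?opprK ?oppr0.
Qed.

Lemma harc_succ_copy g c a b : (1 <= g)%N -> (c < 4)%N -> (a < nv g)%N -> (b < nv g)%N ->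
  harc g.+1 (emb g c a) (emb g c b) = harc g a b.
Proof.
move=> g_ge1 c_lt4 a_lt b_lt; rewrite harc_succ //; apply/idP/idP.
  case/existsP => c' /existsP [a' /existsP [b' /and3P [h /eqP ea /eqP eb]]].
  have ab' : (a' : nat) != b'.
    by apply: contraTneq h => ->; have := harc_asym g b' b'; case: harc.
  by have [_ <- <-] :=
    emb_pair_inj (ltn_ord c') c_lt4 (ltn_ord a') (ltn_ord b') a_lt b_lt ab' ea eb.
move=> h; apply/existsP; exists (Ordinal c_lt4); apply/existsP; exists (Ordinal a_lt).
by apply/existsP; exists (Ordinal b_lt); rewrite h !eqxx.
Qed.

Lemma skew_succ_copy g c a b u v : (1 <= g)%N -> (c < 4)%N -> (a < nv g)%N -> (b < nv g)%N ->
  emb g c a = u -> emb g c b = v -> skew g.+1 u v = skew g a b.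
Proof. by move=> *; subst; rewrite /skew !harc_succ_copy. Qed.

Lemma skew_succ_eq0 g u v : (1 <= g)%N ->
  (forall c a b, (c < 4)%N -> (a < nv g)%N -> (b < nv g)%N ->
     emb g c a = u -> emb g c b = v -> False) ->
  skew g.+1 u v = 0.
Proof.
move=> g_ge1 no_copy.
have harc0 x y : (forall c a b, (c < 4)%N -> (a < nv g)%N -> (b < nv g)%N ->
     emb g c a = x -> emb g c b = y -> False) -> harc g.+1 x y = false.
  move=> nc; rewrite harc_succ //; apply/negbTE/existsP.
  case=> c /existsP [a /existsP [b /and3P [_ /eqP ea /eqP eb]]].
  exact: nc (ltn_ord c) (ltn_ord a) (ltn_ord b) ea eb.
rewrite /skew !harc0 // => c a b c_lt4 a_lt b_lt ea eb.
exact: no_copy c b a c_lt4 b_lt a_lt eb ea.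
Qed.

Definition hub_block g : 'M[int]_2 := \matrix_(i, j) skew g i j.
Definition hub_rows g : 'M[int]_(2, nv g - 2) := \matrix_(i, j) skew g i (2 + j).

Ltac copy_entry c :=
  apply: (@skew_succ_copy _ c); try rewrite /emb /=; repeat case: ifP => /eqP ?; lia.
Ltac no_copy_entry :=
  rewrite skew_succ_eq0 // => -[|[|[|[|?]]]] a b //= _ a_lt b_lt;
  rewrite /emb /=; repeat case: ifP => /eqP ?; lia.

Section Successor.
Variable g : nat.
Hypothesis g_ge1 : (1 <= g)%N.
Local Notation m := (nv g - 2)%N.

(* Rows: the hubs v3, v4, then the interiors of the copies 1, 2, 3 and 4. *)
Let Ks : 'M[int]_(2 + (m + (m + m)) + m) := \matrix_(i, j) skew g.+1 (i + 2) (j + 2).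

Lemma chain3_K_succ : ulsubmx Ks = chain3_mx (hub_block g) (hub_rows g) (K g).
Proof.
have n_ge4 := nv_ge4 g.
have KsT : Ks^T = - Ks by apply/matrixP => i j; rewrite !mxE skew_antisym.
rewrite -(skew_submxK (trmx_ulsub_skew KsT)); congr skew_block_mx.
- apply/matrixP => i j; move: (ltn_ord i) (ltn_ord j) => i_lt j_lt.
  rewrite !mxE /=; copy_entry 1%N.
- rewrite -[ursubmx _]hsubmxK -[rsubmx (ursubmx _)]hsubmxK.
  congr (row_mx _ (row_mx _ _)); apply/matrixP => i j; move: (ltn_ord j) => j_lt.
  + rewrite delta_mulmxE !mxE; case: i => [[|[|i]] i_lt] //=.
    * rewrite mul1r; copy_entry 0%N.
    * rewrite mul0r; no_copy_entry.
  + rewrite !mxE; case: i => [[|[|i]] i_lt] //=; copy_entry 1%N.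
  + rewrite delta_mulmxE !mxE; case: i => [[|[|i]] i_lt] //=.
    * rewrite mul0r; no_copy_entry.
    * rewrite mul1r; copy_entry 2%N.
- rewrite -[drsubmx _]submxK -[drsubmx (drsubmx _)]submxK.
  congr (block_mx _ _ _ (block_mx _ _ _ _)); apply/matrixP => i j;
    move: (ltn_ord i) (ltn_ord j) => i_lt j_lt; rewrite !mxE /=.
  + copy_entry 0%N.
  + no_copy_entry.
  + no_copy_entry.
  + copy_entry 1%N.
  + no_copy_entry.
  + no_copy_entry.
  + copy_entry 2%N.
Qed.

Lemma det_K_succ :
  \det (K g.+1) = \det (chain3_mx (hub_block g) (hub_rows g) (K g)) * \det (K g).
Proof.
have n_ge4 := nv_ge4 g.
have -> : \det (K g.+1) = \det Ks.
  by apply: (det_mx_fun_cast (fun i j => skew g.+1 (i + 2) (j + 2))); rewrite nv_succ //; lia.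
rewrite -[Ks]submxK chain3_K_succ.
have -> : ursubmx Ks = 0.
  apply/matrixP => i j; move: (ltn_ord i) (ltn_ord j) => i_lt j_lt.
  by rewrite !mxE /=; no_copy_entry.
have -> : drsubmx Ks = K g.
  apply/matrixP => i j; move: (ltn_ord i) (ltn_ord j) => i_lt j_lt.
  by rewrite !mxE /=; copy_entry 3%N.
by rewrite det_lblock.
Qed.
End Successor.

Lemma trmx_K g : (K g)^T = - K g.
Proof. by apply/matrixP => i j; rewrite !mxE skew_antisym. Qed.

Lemma det_A_skew_block g :
  \det (A g) = \det (skew_block_mx (hub_block g) (hub_rows g) (K g)).
Proof.
have n_ge4 := nv_ge4 g.
pose As : 'M[int]_(2 + (nv g - 2)) := \matrix_(i, j) skew g i j.
have -> : \det (A g) = \det As.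
  by apply: (det_mx_fun_cast (fun i j => skew g i j)); lia.
have AsT : As^T = - As by apply/matrixP => i j; rewrite !mxE skew_antisym.
rewrite -(skew_submxK AsT); congr (\det (skew_block_mx _ _ _));
  by apply/matrixP => i j; rewrite !mxE /= ?[(2 + _)%N]addnC.
Qed.

Theorem lemma7 (g : nat) (hg : (1 <= g)%N) :
  \det (K g.+1) = (\det (K g)) ^+ 3 * \det (A g).
Proof.
rewrite det_K_succ // det_chain3_mx ?trmx_K ?even_nv_sub2 //.
by rewrite det_A_skew_block; ring.
Qed.
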